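(* Let $(X,\rho)$ be a metric space, $(A_k)\subset CL(X)$, $A\in CL(X)$ and let $f\colon[0,\infty)\to[0,\infty)$ be a modulus. If $(A_k)$ is Wijsman strongly Cesàro summable to $A$, then $(A_k)$ is Wijsman strongly Cesàro summable to $A$ with respect to $f$.
   Context: A modulus is a function $f\colon[0,\infty)\to[0,\infty)$ such that $f(x)=0$ iff $x=0$, $f$ is subadditive, increasing and continuous. $CL(X)$ denotes the set of all non-empty closed subsets of $(X,\rho)$, and $d(x,B)=\inf_{y\in B}\rho(x,y)$. $(A_k)$ is Wijsman strongly Cesàro summable to $A$ if $\lim_{n\to\infty}\frac1n\sum_{k=1}^n|d(x,A_k)-d(x,A)|=0$ for every $x\in X$; it is Wijsman strongly Cesàro summable to $A$ with respect to $f$ if $\lim_{n\to\infty}\frac1n\sum_{k=1}^n f(|d(x,A_k)-d(x,A)|)=0$ for every $x\in X$. *)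

From Stdlib Require Import Reals.
From Coquelicot Require Import Coquelicot.
Open Scope R_scope.

Definition is_metric {X : Type} (rho : X -> X -> R) : Prop :=
  (forall x y, 0 <= rho x y) /\
  (forall x y, rho x y = 0 <-> x = y) /\
  (forall x y, rho x y = rho y x) /\
  (forall x y z, rho x z <= rho x y + rho y z).

Definition is_closed_set {X : Type} (rho : X -> X -> R) (B : X -> Prop) : Prop :=
  forall (u : nat -> X) (x : X),
    (forall n, B (u n)) -> Un_cv (fun n => rho (u n) x) 0 -> B x.

Definition in_CL {X : Type} (rho : X -> X -> R) (B : X -> Prop) : Prop :=
  (exists y, B y) /\ is_closed_set rho B.

(* d(x,B) = inf_{y in B} rho(x,y) (finite for nonempty B, as rho >= 0). *)
Definition dist_set {X : Type} (rho : X -> X -> R) (x : X) (B : X -> Prop) : R :=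
  real (Glb_Rbar (fun r => exists y, B y /\ r = rho x y)).

(* Modulus f : [0,oo) -> [0,oo), represented as R -> R with all
   conditions restricted to [0,oo). *)
Definition is_modulus (f : R -> R) : Prop :=
  (forall x, 0 <= x -> 0 <= f x) /\
  (forall x, 0 <= x -> (f x = 0 <-> x = 0)) /\
  (forall x y, 0 <= x -> 0 <= y -> f (x + y) <= f x + f y) /\
  (forall x y, 0 <= x -> x <= y -> f x <= f y) /\
  (forall x, 0 <= x ->
     filterlim f (within (fun y => 0 <= y) (locally x)) (locally (f x))).

(* (1/n) * sum_{k=1}^n g k, as a sequence in n (value at n = 0 is 0). *)
Definition cesaro_mean (g : nat -> R) (n : nat) : R :=
  / INR n * sum_f 1 n g.

(* Note: Stdlib's sum_f s n f = sum_{i=0}^{n-s} f (i+s), so for n >= 1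
   sum_f 1 n g = g 1 + ... + g n. *)

Definition wijsman_strong_cesaro {X : Type} (rho : X -> X -> R)
  (Ak : nat -> X -> Prop) (A : X -> Prop) : Prop :=
  forall x : X,
    Un_cv (cesaro_mean (fun k => Rabs (dist_set rho x (Ak k) - dist_set rho x A))) 0.

Definition wijsman_strong_cesaro_f {X : Type} (rho : X -> X -> R) (f : R -> R)
  (Ak : nat -> X -> Prop) (A : X -> Prop) : Prop :=
  forall x : X,
    Un_cv (cesaro_mean (fun k => f (Rabs (dist_set rho x (Ak k) - dist_set rho x A)))) 0.

(** Continuity of [f] at [0] gives [d > 0] with [f d <= eps/2], and
    subadditivity plus monotonicity give [f t <= f d + (f d / d) t] for all
    [t >= 0].  Averaging this affine bound, the [n]-th Cesàro
    mean of [f (a k)] is at most [eps/2 + (f d / d) * m n], where [m n] is the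
    [n]-th Cesàro mean of [a k], which tends to [0]. *)

From Stdlib Require Import Reals Lra Lia ZArith.
From Coquelicot Require Import Coquelicot.
Open Scope R_scope.

Lemma cesaro_mean_nonneg (g : nat -> R) (n : nat) :
  (forall k, 0 <= g k) -> 0 <= cesaro_mean g n.
Proof.
  intros Hg. unfold cesaro_mean, sum_f.
  apply Rmult_le_pos; [|now apply cond_pos_sum].
  destruct n as [|n]; [simpl; rewrite Rinv_0; lra|].
  left; apply Rinv_0_lt_compat, lt_0_INR; lia.
Qed.

Lemma cesaro_mean_le_affine (g a : nat -> R) (b c : R) (n : nat) :
  (0 < n)%nat -> (forall k, g k <= b + c * a k) ->
  cesaro_mean g n <= b + c * cesaro_mean a n.
Proof.
  intros Hn Hga. unfold cesaro_mean, sum_f.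
  assert (Hn' : 0 < INR n) by (apply lt_0_INR; lia).
  assert (Hsum : sum_f_R0 (fun i => g (i + 1)%nat) (n - 1)
                 <= b * INR n + c * sum_f_R0 (fun i => a (i + 1)%nat) (n - 1)).
  { eapply Rle_trans.
    - apply sum_Rle with (Bn := fun i => b + a (i + 1)%nat * c).
      intros i _. rewrite Rmult_comm. apply Hga.
    - rewrite sum_plus, sum_cte, scal_sum.
      replace (S (n - 1)) with n by lia. lra. }
  apply Rmult_le_compat_l with (r := / INR n) in Hsum;
    [|left; now apply Rinv_0_lt_compat].
  replace (/ INR n * (b * INR n + c * sum_f_R0 (fun i => a (i + 1)%nat) (n - 1)))
    with (b + c * (/ INR n * sum_f_R0 (fun i => a (i + 1)%nat) (n - 1)))
    in Hsum by (field; lra).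
  exact Hsum.
Qed.

Section SubadditiveMonotone.

Variable f : R -> R.
Hypothesis f_ge0 : forall x, 0 <= x -> 0 <= f x.
Hypothesis f_0 : f 0 = 0.
Hypothesis f_subadditive : forall x y, 0 <= x -> 0 <= y -> f (x + y) <= f x + f y.
Hypothesis f_monotone : forall x y, 0 <= x -> x <= y -> f x <= f y.

Lemma subadditive_le_nat_mul (d : R) (n : nat) (t : R) :
  0 < d -> 0 <= t <= INR n * d -> f t <= INR n * f d.
Proof.
  intros Hd. revert t. induction n as [|n IH]; intros t Ht.
  - simpl in *. replace t with 0 by lra. rewrite f_0. lra.
  - rewrite S_INR in *.
    assert (Hfd : 0 <= f d) by (apply f_ge0; lra).
    assert (Hn : 0 <= INR n) by apply pos_INR.
    destruct (Rle_dec t d) as [Htd|Htd].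
    + assert (f t <= f d) by (apply f_monotone; lra). nra.
    + replace t with (d + (t - d)) by ring.
      assert (f (d + (t - d)) <= f d + f (t - d)) by (apply f_subadditive; lra).
      assert (f (t - d) <= INR n * f d) by (apply IH; lra).
      lra.
Qed.

Lemma subadditive_le_affine (d : R) (t : R) :
  0 < d -> 0 <= t -> f t <= f d + f d / d * t.
Proof.
  intros Hd Ht.
  assert (Hfd : 0 <= f d) by (apply f_ge0; lra).
  assert (Htd : 0 <= t / d) by (apply Rdiv_le_0_compat; lra).
  destruct (archimed (t / d)) as [Hup1 Hup2].
  assert (Hup0 : (0 <= up (t / d))%Z) by (apply le_IZR; lra).
  set (n := Z.to_nat (up (t / d))).
  assert (Hn : INR n = IZR (up (t / d)))
    by (unfold n; now rewrite INR_IZR_INZ, Z2Nat.id).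
  assert (Hdt : t / d * d = t) by (field; lra).
  eapply Rle_trans.
  - apply (subadditive_le_nat_mul d n t Hd). nra.
  - replace (f d / d * t) with (t / d * f d) by (field; lra). nra.
Qed.

Hypothesis f_cont0 : filterlim f (within (fun y => 0 <= y) (locally 0)) (locally 0).

Lemma exists_pos_image_le (e : R) : 0 < e -> exists d, 0 < d /\ f d <= e.
Proof.
  intros He.
  destruct (proj1 (filterlim_locally _ _) f_cont0 (mkposreal e He)) as [[r Hr] Hball].
  exists (r / 2). split; [lra|].
  assert (Hclose : ball 0 r (r / 2)).
  { change (Rabs (r / 2 - 0) < r). rewrite Rabs_pos_eq; lra. }
  specialize (Hball (r / 2) Hclose ltac:(lra)).
  change (Rabs (f (r / 2) - 0) < e) in Hball.
  apply Rabs_def2 in Hball. lra.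
Qed.

Lemma cesaro_mean_comp_cv0 (a : nat -> R) :
  (forall k, 0 <= a k) -> Un_cv (cesaro_mean a) 0 ->
  Un_cv (cesaro_mean (fun k => f (a k))) 0.
Proof.
  intros Ha Hcv eps Heps.
  destruct (exists_pos_image_le (eps / 2)) as [d [Hd Hfd]]; [lra|].
  set (c := f d / d).
  assert (Hc : 0 <= c) by (apply Rdiv_le_0_compat; [apply f_ge0|]; lra).
  destruct (Hcv (eps / 2 / (c + 1))) as [N HN]; [apply Rdiv_lt_0_compat; lra|].
  exists (S N). intros n Hn.
  specialize (HN n ltac:(lia)). unfold Rdist in *. rewrite Rminus_0_r in *.
  assert (Hmean_a : 0 <= cesaro_mean a n) by now apply cesaro_mean_nonneg.
  assert (Hmean_fa : 0 <= cesaro_mean (fun k => f (a k)) n)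
    by (apply cesaro_mean_nonneg; intros; apply f_ge0, Ha).
  rewrite Rabs_pos_eq in * by assumption.
  assert (Hbound : cesaro_mean (fun k => f (a k)) n <= eps / 2 + c * cesaro_mean a n).
  { apply cesaro_mean_le_affine; [lia|].
    intros k. eapply Rle_trans; [apply subadditive_le_affine; [exact Hd|apply Ha]|].
    fold c. lra. }
  assert (Hsmall : cesaro_mean a n * (c + 1) < eps / 2).
  { apply (Rmult_lt_compat_r (c + 1)) in HN; [|lra].
    now replace (eps / 2 / (c + 1) * (c + 1)) with (eps / 2) in HN by (field; lra). }
  nra.
Qed.

End SubadditiveMonotone.

Theorem theorem4p3 (X : Type) (rho : X -> X -> R) (Ak : nat -> X -> Prop)
  (A : X -> Prop) (f : R -> R)
  (Hrho : is_metric rho)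
  (HAk : forall k, in_CL rho (Ak k))
  (HA : in_CL rho A)
  (Hf : is_modulus f) :
  wijsman_strong_cesaro rho Ak A -> wijsman_strong_cesaro_f rho f Ak A.
Proof.
  destruct Hf as [f_ge0 [f_zero [f_subadditive [f_monotone f_cont]]]].
  assert (f_0 : f 0 = 0) by (apply f_zero; lra).
  assert (f_cont0 : filterlim f (within (fun y => 0 <= y) (locally 0)) (locally 0)).
  { rewrite <- f_0 at 2. apply f_cont, Rle_refl. }
  intros Hcesaro x.
  apply cesaro_mean_comp_cv0; auto.
  intros k. apply Rabs_pos.
Qed.
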